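(* Assume the bounded-cost assumption, $J\ge2$, and $T=\Omega(J^2\bar L_T)$ where $\bar L_T=\max_jL^j_T$. If all agents use POMWU with learning rate $\eta^\star=\Theta\big(J^{-1/2}T^{-1/4}[\ln K(\bar L_T+m)]^{1/4}\big)$, then the map $\hat{\boldsymbol\nu}_T$ is an $\varepsilon$-contextual coarse correlated equilibrium with $$\varepsilon=O\big([\ln K(\bar L_T+m)]^{3/4}T^{-3/4}J^{1/2}\big).$$
   Context: Setting. There are $J$ agents indexed by $j\in[J]$. Agent $j$ has a finite action set $\mathcal A^j=\{a^j_1,\dots,a^j_K\}$ with $K$ elements; $\mathcal A=\prod_i\mathcal A^i$, $\mathcal A^{-j}=\prod_{i\ne j}\mathcal A^i$. $\Delta_K$ is the probability simplex in $\mathbb R^K$, $w\in\Delta_K$ identified with a distribution on $\mathcal A^j$; $\mathscr P(S)$ is the set of distributions on a finite set $S$. The context set $\mathcal Z=\{z_1,\dots,z_m\}\subset\mathbb R^d$ is finite with $m$ elements. Agent $j$ has $\phi^j:\mathcal A\to\mathbb R^d$ and cost $c^j(\mathbf w,Z)=\mathbb E_{\mathbf a\sim\mathbf w}[\langle\phi^j(\mathbf a),Z\rangle]$; $c^j(w,\mathbf w^{-j},Z)=c^j(w\otimes\mathbf w^{-j},Z)$. $\Phi^j(\mathbf w^{-j})\in\mathbb R^{d\times K}$ has entries $\Phi^j(\mathbf w^{-j})_{\ell,k}=\mathbb E_{\mathbf a^{-j}\sim\mathbf w^{-j}}[\phi^j(a^j_k,\mathbf a^{-j})[\ell]]$. Bounded-cost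 assumption: $|\langle Z,\phi^j(\mathbf a)\rangle|\le1$ for all $j,\mathbf a,Z$. Game protocol: $T$ rounds, fixed sequence $Z_1,\dots,Z_T\in\mathcal Z$; at round $t$ each agent $j$ receives a prediction $\hat Z^j_t\in\mathcal Z$, plays $w^j_t\in\Delta_K$, incurs $c^j(w^j_t,\mathbf w^{-j}_t,Z_t)$ with $\mathbf w^{-j}_t=\bigotimes_{i\ne j}w^i_t$, and observes $Z_t$ and $\Phi^j(\mathbf w^{-j}_t)$. $\mathscr T^z=\{t:Z_t=z\}$, $n_z=|\mathscr T^z|$, $L^j_T=\sum_{t}\mathbf 1\{\hat Z^j_t\ne Z_t\}$. POMWU with learning rate $\eta>0$ (for agent $j$): maintain for each $z\in\mathcal Z$ a vector $\rho_z\in\mathbb R^K_{>0}$, initialized to $(1/K,\dots,1/K)$, and a matrix $\Psi_z\in\mathbb R^{d\times K}$, initialized to $0$. At round $t$, with $\hat Z=\hat Z^j_t$, play $w^j_t[\ell]=\rho_{\hat Z}[\ell]\exp(-\eta(\Psi_{\hat Z}^\top\hat Z)[\ell])/\sum_{k=1}^K\rho_{\hat Z}[k]\exp(-\eta(\Psi_{\hat Z}^\top\hat Z)[k])$. After observing $Z_t$ and $\Phi_t=\Phi^j(\mathbf w^{-j}_t)$, set $\Psi_{Z_t}\leftarrow\Phi_t$ and $\rho_{Z_t}[\ell]\leftarrow\rho_{Z_t}[\ell]\exp(-\eta(\Phi_t^\top Z_t)[\ell])$ for all $\ell$. $\hat{\boldsymbol\nu}_T:\mathcal Z\to\mathscr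 P(\mathcal A)$: $\hat{\boldsymbol\nu}_T(z)=n_z^{-1}\sum_{t\in\mathscr T^z}w^1_t\otimes\dots\otimes w^J_t$ if $n_z>0$, the uniform distribution on $\mathcal A$ otherwise. For $\boldsymbol\nu:\mathcal Z\to\mathscr P(\mathcal A)$, $\boldsymbol\nu^{-j}(z)$ is the marginal of $\boldsymbol\nu(z)$ on $\mathcal A^{-j}$. An $\varepsilon$-contextual coarse correlated equilibrium is $\boldsymbol\nu:\mathcal Z\to\mathscr P(\mathcal A)$ such that for every $j$ and every $\pi:\mathcal Z\to\Delta_K$, $T^{-1}\sum_tc^j(\boldsymbol\nu(Z_t),Z_t)\le T^{-1}\sum_tc^j(\pi(Z_t),\boldsymbol\nu^{-j}(Z_t),Z_t)+\varepsilon$. $O,\Omega,\Theta$ hide absolute constants. *)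

From HB Require Import structures.
From mathcomp Require Import all_boot all_order all_algebra.
From mathcomp Require Import all_classical all_reals all_analysis.
Set Implicit Arguments. Unset Strict Implicit. Unset Printing Implicit Defensive.
Import Order.TTheory GRing.Theory Num.Theory.
Local Open Scope ring_scope.

Section ContextualGame.
Variables (R : realType) (J K d m : nat).
Local Notation joint := {ffun 'I_J -> 'I_K}.

Definition ip (u v : 'rV[R]_d) : R := \sum_(l < d) u 0 l * v 0 l.

Definition in_simplex (w : 'I_K -> R) : Prop :=
  (forall k, 0 <= w k) /\ \sum_(k < K) w k = 1.

Definition prod_dist (W : 'I_J -> 'I_K -> R) (a : joint) : R :=
  \prod_(i < J) W i (a i).

Definition exp_cost (phij : joint -> 'rV[R]_d) (mu : joint -> R)
    (Z : 'rV[R]_d) : R :=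
  \sum_(a : joint) mu a * ip (phij a) Z.

Definition agree_off (j : 'I_J) (a b : joint) : bool :=
  [forall i, (i != j) ==> (a i == b i)].

(* the marginal mu^{-j} on A^{-j}, evaluated at a^{-j} (the j-th coordinate
   of a is ignored) *)
Definition marginal_minus (j : 'I_J) (mu : joint -> R) (a : joint) : R :=
  \sum_(b : joint | agree_off j a b) mu b.

Definition dev_dist (j : 'I_J) (w : 'I_K -> R) (mu : joint -> R)
    (a : joint) : R :=
  w (a j) * marginal_minus j mu a.

(* Phi^j(w^{-j})_{l,k} = E_{a^{-j} ~ w^{-j}} [phi^j(a^j_k, a^{-j})[l]];
   a^{-j} is enumerated as the joint actions a with a j = k. *)
Definition Phi (phij : joint -> 'rV[R]_d) (j : 'I_J)
    (W : 'I_J -> 'I_K -> R) : 'M[R]_(d, K) :=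
  \matrix_(l < d, k < K)
    \sum_(a : joint | a j == k) (\prod_(i < J | i != j) W i (a i)) * phij a 0 l.

(* POMWU state of all agents: for each agent j and context index z,
   rho_z in R^K and Psi_z in R^{d x K}. Contexts are indexed by 'I_m. *)
Record pomwu_state := PState {
  st_rho : 'I_J -> 'I_m -> 'I_K -> R;
  st_Psi : 'I_J -> 'I_m -> 'M[R]_(d, K) }.

Definition pomwu_init : pomwu_state :=
  PState (fun _ _ _ => (K%:R)^-1) (fun _ _ => 0).

(* strategy of agent j given prediction index zh; note (Psi^T Z)[l] = (Z *m Psi) 0 l *)
Definition pomwu_play (eta : R) (z : 'I_m -> 'rV[R]_d) (st : pomwu_state)
    (j : 'I_J) (zh : 'I_m) : 'I_K -> R :=
  fun l =>
    (st_rho st j zh l * expR (- eta * (z zh *m st_Psi st j zh) 0 l)) /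
    \sum_(k < K) st_rho st j zh k * expR (- eta * (z zh *m st_Psi st j zh) 0 k).

Definition pomwu_update (eta : R) (z : 'I_m -> 'rV[R]_d)
    (phi : 'I_J -> joint -> 'rV[R]_d) (st : pomwu_state) (zt : 'I_m)
    (W : 'I_J -> 'I_K -> R) : pomwu_state :=
  PState
    (fun j zz l => if zz == zt then
        st_rho st j zz l * expR (- eta * (z zt *m Phi (phi j) j W) 0 l)
      else st_rho st j zz l)
    (fun j zz => if zz == zt then Phi (phi j) j W else st_Psi st j zz).

(* Zs t = index of the realized context Z_t ; Zhat j t = index of agent j's
   prediction at round t (rounds are t = 0, 1, ...) *)
Fixpoint pomwu_states (eta : R) (z : 'I_m -> 'rV[R]_d)
    (phi : 'I_J -> joint -> 'rV[R]_d) (Zs : nat -> 'I_m)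
    (Zhat : 'I_J -> nat -> 'I_m) (t : nat) : pomwu_state :=
  match t with
  | 0 => pomwu_init
  | t'.+1 =>
      let st := pomwu_states eta z phi Zs Zhat t' in
      pomwu_update eta z phi st (Zs t')
        (fun j => pomwu_play eta z st j (Zhat j t'))
  end.

Definition pomwu_profile (eta : R) (z : 'I_m -> 'rV[R]_d)
    (phi : 'I_J -> joint -> 'rV[R]_d) (Zs : nat -> 'I_m)
    (Zhat : 'I_J -> nat -> 'I_m) (t : nat) : 'I_J -> 'I_K -> R :=
  fun j => pomwu_play eta z (pomwu_states eta z phi Zs Zhat t) j (Zhat j t).

Definition n_ctx (T : nat) (Zs : nat -> 'I_m) (zz : 'I_m) : nat :=
  \sum_(t < T) (Zs t == zz).

Definition nu_hat (T : nat) (W : nat -> 'I_J -> 'I_K -> R) (Zs : nat -> 'I_m)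
    (zz : 'I_m) (a : joint) : R :=
  if (0 < n_ctx T Zs zz)%N then
    (n_ctx T Zs zz)%:R^-1 * \sum_(t < T | Zs t == zz) prod_dist (W t) a
  else (#|{: joint}|%:R)^-1.

Definition mistakes (T : nat) (Zs : nat -> 'I_m) (Zhat : 'I_J -> nat -> 'I_m)
    (j : 'I_J) : nat :=
  \sum_(t < T) (Zhat j t != Zs t).

Definition max_mistakes (T : nat) (Zs : nat -> 'I_m)
    (Zhat : 'I_J -> nat -> 'I_m) : nat :=
  \max_(j < J) mistakes T Zs Zhat j.

Definition is_contextual_CCE (T : nat) (z : 'I_m -> 'rV[R]_d)
    (phi : 'I_J -> joint -> 'rV[R]_d) (Zs : nat -> 'I_m)
    (nu : 'I_m -> joint -> R) (eps : R) : Prop :=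
  forall (j : 'I_J) (pi : 'I_m -> 'I_K -> R),
    (forall zz, in_simplex (pi zz)) ->
    T%:R^-1 * \sum_(t < T) exp_cost (phi j) (nu (Zs t)) (z (Zs t))
    <= T%:R^-1 * \sum_(t < T)
         exp_cost (phi j) (dev_dist j (pi (Zs t)) (nu (Zs t))) (z (Zs t))
       + eps.

End ContextualGame.

From HB Require Import structures.
From mathcomp Require Import all_boot all_order all_algebra.
From mathcomp Require Import all_classical all_reals all_analysis.
From mathcomp Require Import ring lra.
Import Order.TTheory GRing.Theory Num.Theory.
Local Open Scope ring_scope.

(* The CCE gap of [nu_hat] for agent [j] and deviation [pi] is the average over
   rounds of the regret [\sum_k (w^j_t - pi(Z_t))_k c_t(k)], where [c_t] is the
   cost vector of agent [j] against the other agents' strategies.  Played with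
   the true context, POMWU is optimistic multiplicative weights run separately
   on the rounds of each context, with the cost vector of the previous visit as
   hint; a wrong prediction costs at most [2].  The log-potential argument
   bounds the regret of each optimistic learner by [ln K / eta] plus [2 eta]
   times the squared hint errors.  Between two visits of a context every agent
   that predicted correctly moves its strategy by [O(eta)] in l1, so the hint
   error is [O(eta J)] plus the mispredictions at both visits.  Altogether
   regret <= m ln K / eta + O(eta^3 J^2 T + eta J^2 Lbar + Lbar),
   and the choice of [eta] balances the first two terms. *)

Section ExpBounds.
Context {R : realType}.
Implicit Types x y : R.

Lemma expR_le_invr1B y : y < 1 -> expR y <= (1 - y)^-1.
Proof.
move=> hy; have h := expR_ge1Dx (- y).
rewrite -[expR y]invrK -expRN lef_pV2 ?posrE ?expR_gt0 //; lra.
Qed.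

Lemma expR_le_quad y : y <= 1/2 -> expR y <= 1 + y + 2 * y ^+ 2.
Proof.
move=> hy; apply: le_trans (expR_le_invr1B _ _) _; first lra.
have p : 0 < 1 - y by lra.
rewrite -[(1 - y)^-1]mulr1 ler_pdivrMl //.
have : 0 <= y ^+ 2 * (1 - 2 * y) by apply: mulr_ge0; [exact: sqr_ge0 | lra].
rewrite expr2 => h; nra.
Qed.

Lemma expR_subr1_le y : 0 <= y -> y <= 1/2 -> expR y - 1 <= 2 * y.
Proof. by move=> h0 h1; have := expR_le_quad _ h1; rewrite expr2 => h; nra. Qed.

Lemma ln_le_subr1 x : 0 < x -> ln x <= x - 1.
Proof. by move=> hx; have := @le_ln1Dx R (x - 1); rewrite addrCA subrr addr0; apply; lra. Qed.

Lemma ln2_ge_half : 1/2 <= ln (2 : R).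
Proof.
rewrite -[X in X <= _]expRK ler_ln ?posrE ?expR_gt0 //.
apply: le_trans (expR_le_invr1B _ _) _; first lra.
by rewrite (_ : 1 - 1/2 = 2^-1 :> R) ?invrK //; field.
Qed.

Lemma ratio_near1 x a b : 0 <= x -> x <= 1/4 ->
  expR (- x) <= a <= expR x -> expR (- x) <= b <= expR x -> `|a / b - 1| <= 4 * x.
Proof.
move=> x0 x4 /andP[a1 a2] /andP[b1 b2].
have b0 : 0 < b := lt_le_trans (expR_gt0 _) b1.
have up : a / b <= expR (2 * x).
  rewrite ler_pdivrMr //; apply: le_trans a2 _.
  have -> : expR x = expR (2 * x) * expR (- x) by rewrite -expRD; congr expR; ring.
  by apply: ler_wpM2l; first exact: expR_ge0.
have lo : expR (- (2 * x)) <= a / b.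
  rewrite ler_pdivlMr //; apply: le_trans _ a1.
  have -> : expR (- x) = expR (- (2 * x)) * expR x by rewrite -expRD; congr expR; ring.
  by apply: ler_wpM2l; first exact: expR_ge0.
have e1 : expR (2 * x) - 1 <= 4 * x by apply: le_trans (expR_subr1_le (2 * x) _ _) _; lra.
have e2 : 1 - expR (- (2 * x)) <= 2 * x by have := expR_ge1Dx (- (2 * x)); lra.
rewrite ler_norml; apply/andP; split; lra.
Qed.

End ExpBounds.

Section Simplex.
Context {R : realType} {K : nat}.
Implicit Types w : 'I_K -> R.

Lemma simplex_ge0 {w} k : in_simplex w -> 0 <= w k.
Proof. by case. Qed.

Lemma simplex_sum1 {w} : in_simplex w -> \sum_k w k = 1.
Proof. by case. Qed.

Lemma simplex_nonempty {w} : in_simplex w -> (0 < K)%N.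
Proof.
move=> /simplex_sum1; case: K w => [|//] w; rewrite big_ord0 => /eqP.
by rewrite eq_sym oner_eq0.
Qed.

Lemma simplex_single {w} k : K = 1%N -> in_simplex w -> w k = 1.
Proof.
move=> K1 /simplex_sum1; rewrite (bigD1 k) //= big1 ?addr0 // => i.
suff -> : i = k by rewrite eqxx.
have lt1 (l : 'I_K) : (val l < 1)%N by rewrite -K1 ltn_ord.
by apply: val_inj; move: (lt1 i) (lt1 k); rewrite !ltnS !leqn0 => /eqP -> /eqP ->.
Qed.

Lemma simplex_mixC {w} c : in_simplex w -> \sum_k w k * c = c.
Proof. by move=> hw; rewrite -mulr_suml simplex_sum1 // mul1r. Qed.

Lemma expR_mix_le w y : in_simplex w ->
  expR (\sum_k w k * y k) <= \sum_k w k * expR (y k).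
Proof.
move=> hw; set c := \sum_k w k * y k.
apply: (@le_trans _ _ (\sum_k w k * (expR c * (1 + (y k - c))))).
  have -> : \sum_k w k * (expR c * (1 + (y k - c))) =
      expR c * (\sum_k w k * (1 - c) + \sum_k w k * y k).
    by rewrite -big_split mulr_sumr; apply: eq_bigr => k _ /=; ring.
  by rewrite simplex_mixC // -/c subrK mulr1.
apply: ler_sum => k _; apply: ler_wpM2l; first exact: simplex_ge0 k hw.
have -> : expR (y k) = expR c * expR (y k - c) by rewrite -expRD subrKC.
by apply: ler_wpM2l; [exact: expR_ge0 | exact: expR_ge1Dx].
Qed.

Lemma mix_expR_gt0 w y : in_simplex w -> 0 < \sum_k w k * expR (y k).
Proof. by move=> hw; exact: lt_le_trans (expR_gt0 _) (expR_mix_le w y hw). Qed.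

Lemma ln_mix_expR_ge w y : in_simplex w ->
  \sum_k w k * y k <= ln (\sum_k w k * expR (y k)).
Proof.
move=> hw; have jensen := expR_mix_le w y hw.
rewrite -[X in X <= _]expRK ler_ln // posrE ?expR_gt0 //.
exact: lt_le_trans (expR_gt0 _) jensen.
Qed.

Lemma ln_mix_expR_le w y M : in_simplex w ->
  (forall k, y k <= 1/2) -> (forall k, y k ^+ 2 <= M) ->
  ln (\sum_k w k * expR (y k)) <= \sum_k w k * y k + 2 * M.
Proof.
move=> hw y_le y2_le.
have quad : \sum_k w k * expR (y k) <= 1 + \sum_k w k * y k + 2 * M.
  apply: (@le_trans _ _ (\sum_k w k * (1 + y k + 2 * M))).
    apply: ler_sum => k _; apply: ler_wpM2l; first exact: simplex_ge0 k hw.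
    by apply: le_trans (expR_le_quad _ (y_le k)) _; have := y2_le k; lra.
  have -> : \sum_k w k * (1 + y k + 2 * M) =
      \sum_k w k * 1 + \sum_k w k * y k + \sum_k w k * (2 * M).
    by rewrite -!big_split; apply: eq_bigr => k _ /=; ring.
  by rewrite !simplex_mixC.
by apply: le_trans (ln_le_subr1 _ (mix_expR_gt0 w y hw)) _; lra.
Qed.

End Simplex.

Section Softmax.
Context {R : realType} {K : nat}.
Variable eta : R.
Hypothesis K_gt0 : (0 < K)%N.
Implicit Types rho h p w : 'I_K -> R.

Definition softmax rho h l : R :=
  rho l * expR (- eta * h l) / \sum_k rho k * expR (- eta * h k).

Lemma sumr_ord_gt0 (f : 'I_K -> R) : (forall k, 0 < f k) -> 0 < \sum_k f k.
Proof.
move=> f_gt0; rewrite (bigD1 (Ordinal K_gt0)) //=.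
by rewrite ltr_pwDl // sumr_ge0 // => i _; exact: ltW.
Qed.

Lemma softmax_den_gt0 rho h : (forall k, 0 < rho k) ->
  0 < \sum_k rho k * expR (- eta * h k).
Proof. by move=> rho_gt0; apply: sumr_ord_gt0 => k; rewrite mulr_gt0 ?expR_gt0. Qed.

Lemma softmax_simplex rho h : (forall k, 0 < rho k) -> in_simplex (softmax rho h).
Proof.
move=> rho_gt0; have hS := softmax_den_gt0 rho h rho_gt0; split.
  by move=> k; apply: divr_ge0; [apply: mulr_ge0; [exact: ltW | exact: expR_ge0] | exact: ltW].
by rewrite -mulr_suml divff // lt0r_neq0.
Qed.

Lemma eq_softmax rho1 rho2 h1 h2 l : rho1 =1 rho2 -> h1 =1 h2 ->
  softmax rho1 h1 l = softmax rho2 h2 l.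
Proof.
move=> e1 e2; rewrite /softmax e1 e2; congr (_ / _).
by apply: eq_bigr => k _; rewrite e1 e2.
Qed.

Lemma softmaxD rho c h l :
  softmax (fun k => rho k * expR (- eta * c k)) h l = softmax rho (fun k => c k + h k) l.
Proof.
rewrite /softmax; under eq_bigr do rewrite -mulrA -expRD -mulrDr.
by rewrite -[rho l * _ * _]mulrA -expRD -mulrDr.
Qed.

Lemma softmax_mix rho h w : (forall k, 0 < rho k) ->
  \sum_k rho k * expR (- eta * h k) * w k =
  (\sum_k rho k * expR (- eta * h k)) * \sum_k softmax rho h k * w k.
Proof.
move=> rho_gt0; have hS := softmax_den_gt0 rho h rho_gt0.
rewrite mulr_sumr; apply: eq_bigr => k _; rewrite /softmax.
by field; rewrite lt0r_neq0.
Qed.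

Lemma softmax_rebase rho a b l : (forall k, 0 < rho k) ->
  softmax rho b l = softmax (softmax rho a) (fun k => b k - a k) l.
Proof.
move=> rho_gt0; have Sa_gt0 := softmax_den_gt0 rho a rho_gt0.
have Sb_gt0 := softmax_den_gt0 rho b rho_gt0.
set Sa := \sum_k _ in Sa_gt0; set Sb := \sum_k _ in Sb_gt0.
have num k : rho k * expR (- eta * a k) / Sa * expR (- eta * (b k - a k)) =
    rho k * expR (- eta * b k) / Sa.
  have -> : expR (- eta * b k) = expR (- eta * a k) * expR (- eta * (b k - a k)).
    by rewrite -expRD; congr expR; ring.
  by ring.
rewrite /softmax -/Sa num (eq_bigr _ (fun k _ => num k)) -mulr_suml -/Sb.
by field; rewrite !lt0r_neq0.
Qed.

Lemma softmax_near_base p g x : in_simplex p -> 0 <= x -> x <= 1/4 ->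
  (forall k, `|eta * g k| <= x) -> \sum_k `|softmax p g k - p k| <= 4 * x.
Proof.
move=> hp x0 x4 hg.
pose e k := expR (- eta * g k); pose mu := \sum_k p k * e k.
have e_near k : expR (- x) <= e k <= expR x.
  have := hg k; rewrite ler_norml => /andP[h1 h2].
  by rewrite !ler_expR; apply/andP; split; lra.
have mu_near : expR (- x) <= mu <= expR x.
  rewrite /mu; apply/andP; split.
    rewrite -[X in X <= _](simplex_mixC _ hp); apply: ler_sum => k _.
    by apply: ler_wpM2l; [exact: simplex_ge0 k hp | case/andP: (e_near k)].
  rewrite -[X in _ <= X](simplex_mixC _ hp); apply: ler_sum => k _.
  by apply: ler_wpM2l; [exact: simplex_ge0 k hp | case/andP: (e_near k)].
rewrite -[X in _ <= X](simplex_mixC _ hp); apply: ler_sum => k _.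
have mu_gt0 : 0 < mu by case/andP: mu_near => + _; exact: lt_le_trans (expR_gt0 _).
have -> : softmax p g k - p k = p k * (e k / mu - 1).
  by rewrite /softmax /e /mu in mu_gt0 *; field; rewrite lt0r_neq0.
by rewrite normrM ger0_norm ?(simplex_ge0 k hp) // ler_wpM2l ?(simplex_ge0 k hp) ?ratio_near1.
Qed.

Lemma softmax_stable rho a b D : (forall k, 0 < rho k) -> 0 <= eta ->
  0 <= D -> eta * D <= 1/4 -> (forall k, `|a k - b k| <= D) ->
  \sum_k `|softmax rho b k - softmax rho a k| <= 4 * (eta * D).
Proof.
move=> rho_gt0 eta0 D0 etaD hab.
under eq_bigr do rewrite (softmax_rebase _ a) //.
apply: softmax_near_base => //; [exact: softmax_simplex | exact: mulr_ge0 | move=> k].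
by rewrite normrM ger0_norm // ler_wpM2l // distrC.
Qed.

Lemma softmax_den_shift rho h u : (forall k, 0 < rho k) ->
  \sum_k rho k * expR (- eta * u k) =
  (\sum_k rho k * expR (- eta * h k)) *
  \sum_k softmax rho h k * expR (- eta * (u k - h k)).
Proof.
move=> rho_gt0; rewrite -softmax_mix //; apply: eq_bigr => k _.
by rewrite -mulrA -expRD; congr (_ * expR _); ring.
Qed.

Definition log_potential rho p : R :=
  (\sum_k p k * ln (rho k) - ln (\sum_k rho k)) / eta.

Lemma log_potential_le0 rho p : (forall k, 0 < rho k) -> 0 < eta ->
  in_simplex p -> log_potential rho p <= 0.
Proof.
move=> rho_gt0 eta_gt0 hp; rewrite /log_potential pmulr_lle0 ?invr_gt0 // subr_le0.
rewrite -[X in _ <= X](simplex_mixC _ hp); apply: ler_sum => k _.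
apply: ler_wpM2l; first exact: simplex_ge0 k hp.
rewrite ler_ln ?posrE ?sumr_ord_gt0 // (bigD1 k) //= lerDl.
by apply: sumr_ge0 => i _; exact: ltW.
Qed.

Lemma log_potential_uniform p : in_simplex p ->
  log_potential (fun _ => K%:R^-1) p = - ln K%:R / eta.
Proof.
move=> hp; rewrite /log_potential simplex_mixC // sumr_const card_ord.
by rewrite -(mulr_natr (K%:R^-1)) mulVf ?pnatr_eq0 -?lt0n // ln1 subr0 lnV ?posrE ?ltr0n.
Qed.

Lemma log_potential_update rho u p : (forall k, 0 < rho k) -> eta != 0 ->
  in_simplex p ->
  log_potential (fun k => rho k * expR (- eta * u k)) p - log_potential rho p =
  (ln (\sum_k rho k) - ln (\sum_k rho k * expR (- eta * u k))) / eta
  - \sum_k p k * u k.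
Proof.
move=> rho_gt0 eta_neq0 hp; rewrite /log_potential.
under eq_bigr do rewrite lnM ?posrE ?expR_gt0 // expRK mulrDr mulrCA.
by rewrite big_split /= -mulr_sumr; field.
Qed.

Lemma log_potential_step rho h u p M : (forall k, 0 < rho k) ->
  0 < eta -> eta <= 1/4 -> in_simplex p ->
  (forall k, `|u k - h k| <= 2) -> (forall k, (u k - h k) ^+ 2 <= M) ->
  \sum_k (softmax rho h k - p k) * u k <=
  log_potential (fun k => rho k * expR (- eta * u k)) p - log_potential rho p
  + 2 * eta * M.
Proof.
move=> rho_gt0 eta_gt0 eta_le hp uh_le uh2_le.
have hV := softmax_simplex rho h rho_gt0; set V := softmax rho h in hV *.
rewrite log_potential_update ?gt_eqF //.
have Sh_gt0 := softmax_den_gt0 rho h rho_gt0.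
have sum_rho : \sum_k rho k =
    (\sum_k rho k * expR (- eta * h k)) * \sum_k V k * expR (- eta * (0 - h k)).
  rewrite -(softmax_den_shift rho h (fun=> 0)) //.
  by apply: eq_bigr => k _; rewrite mulr0 expR0 mulr1.
rewrite sum_rho (softmax_den_shift rho h u) // !lnM ?posrE ?Sh_gt0 ?(mix_expR_gt0 V) //.
set B := ln (\sum_k V k * _); set A := ln (\sum_k V k * _).
have B_ge : \sum_k V k * (- eta * (0 - h k)) <= B by exact: ln_mix_expR_ge.
have A_le : A <= \sum_k V k * (- eta * (u k - h k)) + 2 * (eta ^+ 2 * M).
  apply: ln_mix_expR_le => // k; first by have := uh_le k; rewrite ler_norml => /andP[]; nra.
  by rewrite exprMn sqrrN ler_wpM2l ?sqr_ge0.
have gain : \sum_k V k * (- eta * (0 - h k)) - \sum_k V k * (- eta * (u k - h k)) =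
    eta * \sum_k V k * u k.
  by rewrite -sumrB mulr_sumr; apply: eq_bigr => k _; ring.
rewrite -(ler_pM2l eta_gt0) (eq_bigr (fun k => V k * u k - p k * u k)); last first.
  by move=> k _; ring.
rewrite sumrB.
have -> : eta * ((ln (\sum_k rho k * expR (- eta * h k)) + B -
      (ln (\sum_k rho k * expR (- eta * h k)) + A)) / eta - \sum_k p k * u k + 2 * eta * M)
    = B - A - eta * \sum_k p k * u k + 2 * eta ^+ 2 * M.
  by field; rewrite gt_eqF.
rewrite mulrBr; lra.
Qed.

End Softmax.

Section ActionCost.
Context {R : realType} {J K d : nat}.
Variable phi : 'I_J -> {ffun 'I_J -> 'I_K} -> 'rV[R]_d.
Local Notation joint := {ffun 'I_J -> 'I_K}.
Implicit Types (X Y : 'I_J -> 'I_K -> R) (Z : 'rV[R]_d).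

Definition action_cost j X Z k : R := (Z *m Phi (phi j) j X) 0 k.

Lemma action_costE j X Z k : action_cost j X Z k =
  \sum_(a : joint | a j == k) (\prod_(i | i != j) X i (a i)) * ip (phi j a) Z.
Proof.
rewrite /action_cost !mxE; under eq_bigr => l _ do rewrite mxE mulr_sumr.
rewrite (exchange_big_dep (fun a : joint => a j == k)) //=; apply: eq_bigr => a ha.
rewrite (eq_bigl (fun _ => true)) => [|l]; last by rewrite ha.
by rewrite /ip mulr_sumr; apply: eq_bigr => l _; rewrite mulrCA [Z 0 l * _]mulrC.
Qed.

Lemma eq_action_cost j X Y Z k : (forall i, i != j -> X i =1 Y i) ->
  action_cost j X Z k = action_cost j Y Z k.
Proof.
move=> eqXY; rewrite !action_costE; apply: eq_bigr => a _; congr (_ * _).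
by apply: eq_bigr => i hi; rewrite eqXY.
Qed.

Lemma sum_fixed_prod j k (F : 'I_J -> 'I_K -> R) :
  \sum_(a : joint | a j == k) \prod_(i | i != j) F i (a i) =
  \prod_(i | i != j) \sum_k' F i k'.
Proof.
pose G i k' := if i == j then (k' == k)%:R else F i k'.
transitivity (\sum_(a : joint) \prod_i G i (a i)).
  rewrite big_mkcond; apply: eq_bigr => a _.
  rewrite [RHS](bigD1 j) //= {1}/G eqxx.
  rewrite [in RHS](eq_bigr (fun i => F i (a i))) => [|i /negbTE hi]; last by rewrite /G hi.
  by case: (a j == k); rewrite ?mul1r ?mul0r.
rewrite -(bigA_distr_bigA G) (bigD1 j) //= {1}/G eqxx (bigD1 k) //= eqxx.
rewrite big1 => [|k' /negbTE -> //]; rewrite addr0 mul1r.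
by apply: eq_bigr => i /negbTE hi; rewrite /G hi.
Qed.

Lemma sum_others_simplex j k X : (forall i, i != j -> in_simplex (X i)) ->
  \sum_(a : joint | a j == k) \prod_(i | i != j) X i (a i) = 1.
Proof.
by move=> hX; rewrite sum_fixed_prod big1 // => i hi; exact: simplex_sum1 (hX i hi).
Qed.

Lemma sum_action_cost j (g : 'I_K -> R) X Z :
  \sum_(a : joint) g (a j) * \prod_(i | i != j) X i (a i) * ip (phi j a) Z
  = \sum_k g k * action_cost j X Z k.
Proof.
rewrite (partition_big (fun a : joint => a j) xpredT) //=.
apply: eq_bigr => k _; rewrite action_costE mulr_sumr.
by apply: eq_big => [a|a /eqP <-]; rewrite ?mulrA.
Qed.

Lemma exp_cost_prod_dist j X Z :
  exp_cost (phi j) (prod_dist X) Z = \sum_k X j k * action_cost j X Z k.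
Proof.
rewrite /exp_cost -sum_action_cost; apply: eq_bigr => a _.
by rewrite /prod_dist (bigD1 j).
Qed.

Lemma marginal_minus_prod_dist j X (a : joint) : in_simplex (X j) ->
  marginal_minus j (prod_dist X) a = \prod_(i | i != j) X i (a i).
Proof.
move=> hXj; pose F i k := if i == j then X j k else (k == a i)%:R * X i k.
transitivity (\sum_(b : joint) \prod_i F i (b i)).
  rewrite /marginal_minus big_mkcond; apply: eq_bigr => b _.
  rewrite [in RHS](bigD1 j) //= {1}/F eqxx /prod_dist (bigD1 j) //=.
  case: (boolP (agree_off j a b)) => [/forallP ab | /forallPn[i]].
    congr (_ * _); apply: eq_bigr => i hi; rewrite /F (negbTE hi).
    by move: (ab i); rewrite hi eq_sym => /eqP ->; rewrite eqxx mul1r.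
  rewrite negb_imply => /andP[hi ab]; rewrite (bigD1 i) //= {1}/F (negbTE hi).
  by rewrite eq_sym (negbTE ab) !mul0r mulr0.
rewrite -(bigA_distr_bigA F) (bigD1 j) //= {1}/F eqxx (simplex_sum1 hXj) mul1r.
apply: eq_bigr => i hi; rewrite /F (negbTE hi) (bigD1 (a i)) //= eqxx mul1r.
by rewrite big1 ?addr0 // => k /negbTE ->; rewrite mul0r.
Qed.

Variable Z : 'rV[R]_d.
Hypothesis cost_bounded : forall j a, `|ip (phi j a) Z| <= 1.

Lemma action_cost_bound j X k : (forall i, i != j -> in_simplex (X i)) ->
  `|action_cost j X Z k| <= 1.
Proof.
move=> hX; rewrite action_costE -[X in _ <= X](@sum_others_simplex j k X hX).
apply: le_trans (ler_norm_sum _ _ _) _; apply: ler_sum => a _.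
have P_ge0 : 0 <= \prod_(i | i != j) X i (a i).
  by apply: prodr_ge0 => i hi; exact: simplex_ge0 _ (hX i hi).
by rewrite normrM ger0_norm // ler_piMr.
Qed.

Lemma action_cost_step j r X Y k : (forall i, i != r -> X i = Y i) ->
  (forall i, i != r -> in_simplex (X i)) ->
  `|action_cost j X Z k - action_cost j Y Z k| <= \sum_k' `|X r k' - Y r k'|.
Proof.
move=> eqXY hX; rewrite !action_costE -sumrB.
have [<-|rj] := eqVneq r j.
  rewrite big1 ?normr0 ?sumr_ge0 // => a _.
  by rewrite (eq_bigr (fun i => Y i (a i))) ?subrr // => i hi; rewrite eqXY.
pose F i k' := if i == r then `|X r k' - Y r k'| else X i k'.
apply: le_trans (ler_norm_sum _ _ _) _.
apply: (@le_trans _ _ (\sum_(a : joint | a j == k) \prod_(i | i != j) F i (a i))).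
  apply: ler_sum => a _; rewrite -mulrBl normrM.
  rewrite !(bigD1 r (P := fun i => i != j)) //= /F eqxx.
  rewrite [in X in _ <= X](eq_bigr (fun i => X i (a i))) => [|i /andP[_ /negbTE -> //]].
  rewrite [in X in _ - X](eq_bigr (fun i => X i (a i))) => [|i /andP[_ hi]]; last first.
    by rewrite eqXY.
  have P_ge0 : 0 <= \prod_(i | (i != j) && (i != r)) X i (a i).
    by apply: prodr_ge0 => i /andP[_ hi]; exact: simplex_ge0 _ (hX i hi).
  by rewrite -mulrBl normrM (ger0_norm P_ge0) ler_piMr ?mulr_ge0.
rewrite sum_fixed_prod (bigD1 r (P := fun i => i != j)) //=.
rewrite [X in _ * X <= _]big1 => [|i /andP[_ hi]]; last first.
  by rewrite /F (negbTE hi); exact: simplex_sum1 (hX i hi).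
by rewrite mulr1 /F eqxx.
Qed.

Lemma action_cost_lipschitz j X Y k : (forall i, in_simplex (X i)) ->
  (forall i, in_simplex (Y i)) ->
  `|action_cost j X Z k - action_cost j Y Z k| <= \sum_i \sum_k' `|X i k' - Y i k'|.
Proof.
move=> hX hY; pose H (n : nat) (i : 'I_J) := if (i < n)%N then Y i else X i.
pose f n := action_cost j (H n) Z k.
have f0 : f 0%N = action_cost j X Z k by apply: eq_action_cost.
have fJ : f J = action_cost j Y Z k.
  by apply: eq_action_cost => i _ k'; rewrite /H ltn_ord.
rewrite -f0 -fJ distrC -(telescope_sumr f (leq0n J)) big_mkord.
apply: le_trans (ler_norm_sum _ _ _) _; apply: ler_sum => i _.
rewrite distrC; apply: le_trans (@action_cost_step j i (H i) (H i.+1) k _ _) _.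
- move=> i' hi'; have /negbTE ne : nat_of_ord i' != i by [].
  by rewrite /H [in RHS]ltnS [in RHS]leq_eqVlt ne.
- by move=> i' _; rewrite /H; case: ifP.
- by rewrite /H ltnn ltnSn.
Qed.

End ActionCost.

Section Dynamics.
Context {R : realType} {J K d m : nat}.
Variable eta : R.
Variables (z : 'I_m -> 'rV[R]_d) (phi : 'I_J -> {ffun 'I_J -> 'I_K} -> 'rV[R]_d).
Variables (Zs : nat -> 'I_m) (Zhat : 'I_J -> nat -> 'I_m).
Hypothesis K_gt0 : (0 < K)%N.
Hypothesis cost_bounded : forall j a zz, `|ip (phi j a) (z zz)| <= 1.

Local Notation st t := (pomwu_states eta z phi Zs Zhat t).
Local Notation W t := (pomwu_profile eta z phi Zs Zhat t).

Definition informed_play t i := pomwu_play eta z (st t) i (Zs t).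
Definition round_cost t i k := action_cost phi i (W t) (z (Zs t)) k.
Definition round_hint t i k := (z (Zs t) *m st_Psi (st t) i (Zs t)) 0 k.

Fixpoint last_visit (t : nat) (zz : 'I_m) : option nat :=
  if t is t'.+1 then (if Zs t' == zz then Some t' else last_visit t' zz) else None.

Lemma st_rho_cur t i k :
  st_rho (st t.+1) i (Zs t) k = st_rho (st t) i (Zs t) k * expR (- eta * round_cost t i k).
Proof. by rewrite /= eqxx. Qed.

Lemma st_rho_other t i zz k : zz != Zs t ->
  st_rho (st t.+1) i zz k = st_rho (st t) i zz k.
Proof. by move=> /negbTE /= ->. Qed.

Lemma st_Psi_other t i zz : zz != Zs t -> st_Psi (st t.+1) i zz = st_Psi (st t) i zz.
Proof. by move=> /negbTE /= ->. Qed.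

Lemma st_rho_gt0 t i zz k : 0 < st_rho (st t) i zz k.
Proof.
elim: t zz k => [|t IH] zz k /=; first by rewrite invr_gt0 ltr0n.
by case: ifP => _; rewrite ?mulr_gt0 ?expR_gt0.
Qed.

Lemma profile_simplex t i : in_simplex (W t i).
Proof. exact: softmax_simplex _ K_gt0 _ _ (st_rho_gt0 t i _). Qed.

Lemma informed_play_simplex t i : in_simplex (informed_play t i).
Proof. exact: softmax_simplex _ K_gt0 _ _ (st_rho_gt0 t i _). Qed.

Lemma state_last_visit t i zz :
  if last_visit t zz is Some s then
    [/\ (s < t)%N, Zs s = zz, st_rho (st t) i zz =1 st_rho (st s.+1) i zz &
        st_Psi (st t) i zz = st_Psi (st s.+1) i zz]
  else st_rho (st t) i zz =1 (fun=> K%:R^-1) /\ st_Psi (st t) i zz = 0.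
Proof.
elim: t => [//|t IH]; rewrite [last_visit _ _]/=.
have [<-|ne] := eqVneq (Zs t) zz; first by [].
have ne' : zz != Zs t by rewrite eq_sym.
case: (last_visit t zz) IH => [s [lt_st Zs_s rho_s Psi_s]|[rho0 Psi0]].
  split; [exact: ltnW | exact: Zs_s | move=> k |].
    by rewrite st_rho_other ?rho_s.
  by rewrite st_Psi_other ?Psi_s.
by split; [move=> k; rewrite st_rho_other ?rho0 | rewrite st_Psi_other ?Psi0].
Qed.

Lemma round_cost_bound t i k : `|round_cost t i k| <= 1.
Proof.
by apply: action_cost_bound => [j a|i' _]; [exact: cost_bounded | exact: profile_simplex].
Qed.

Lemma round_hint_last_visit t i s : last_visit t (Zs t) = Some s ->
  Zs s = Zs t /\ round_hint t i =1 round_cost s i.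
Proof.
move=> e; have := state_last_visit t i (Zs t); rewrite e => -[_ Zs_s _ Psi_s].
by split=> // k; rewrite /round_hint Psi_s -Zs_s /= eqxx.
Qed.

Lemma round_hint_unvisited t i : last_visit t (Zs t) = None -> round_hint t i =1 (fun=> 0).
Proof.
move=> e k; have := state_last_visit t i (Zs t); rewrite e => -[_ Psi0].
by rewrite /round_hint Psi0 mulmx0 mxE.
Qed.

Lemma round_hint_bound t i k : `|round_hint t i k| <= 1.
Proof.
case e : (last_visit t (Zs t)) => [s|]; last by rewrite round_hint_unvisited ?normr0.
by have [_ ->] := round_hint_last_visit _ i _ e; exact: round_cost_bound.
Qed.

Definition miss i t : R := (Zhat i t != Zs t)%:R.
Definition misses t : R := \sum_i miss i t.

Lemma misses_ge0 t : 0 <= misses t.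
Proof. by apply: sumr_ge0 => i _; exact: ler0n. Qed.

Lemma misses_leJ t : misses t <= J%:R.
Proof.
rewrite -[J]card_ord -sumr_const; apply: ler_sum => i _.
by rewrite /miss; case: (_ != _).
Qed.

Lemma profile_informed_dist t i : \sum_k `|W t i k - informed_play t i k| <= 2 * miss i t.
Proof.
rewrite /miss /informed_play /pomwu_profile.
have [->|_] := eqVneq (Zhat i t) (Zs t).
  by rewrite big1 ?mulr0 // => k _; rewrite subrr normr0.
have hW := profile_simplex t i; have hV := informed_play_simplex t i.
apply: (@le_trans _ _ (\sum_k (W t i k + informed_play t i k))).
  apply: ler_sum => k _; apply: le_trans (ler_normB _ _) _.
  by rewrite !ger0_norm ?(simplex_ge0 k hW) ?(simplex_ge0 k hV).
by rewrite big_split /= (simplex_sum1 hW) (simplex_sum1 hV) mulr1.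
Qed.

(* Between the visits [s < t] of a context only its own update happens: the
   weights at [t] are those at [s] reweighted by the cost of round [s], which is
   also the hint at [t]. *)
Lemma informed_play_drift t s i : last_visit t (Zs t) = Some s ->
  0 <= eta -> eta * 3 <= 1/4 ->
  \sum_k `|informed_play t i k - informed_play s i k| <= 4 * (eta * 3).
Proof.
move=> e eta_ge0 eta3.
have := state_last_visit t i (Zs t); rewrite e => -[_ Zs_s rho_s _].
have [_ hint_s] := round_hint_last_visit _ i _ e.
have -> : \sum_k `|informed_play t i k - informed_play s i k| =
    \sum_k `|softmax eta (st_rho (st s) i (Zs s))
                (fun k => round_cost s i k + round_cost s i k) k
              - softmax eta (st_rho (st s) i (Zs s)) (round_hint s i) k|.
  apply: eq_bigr => k _; rewrite -softmaxD; congr (`|_ - _|).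
  by apply: eq_softmax => // k'; rewrite rho_s -Zs_s st_rho_cur.
apply: (softmax_stable _ K_gt0) => //; first exact: st_rho_gt0.
move=> k; have := round_hint_bound s i k; have := round_cost_bound s i k.
by rewrite !ler_norml => /andP[? ?] /andP[? ?]; apply/andP; split; lra.
Qed.

Lemma profile_drift t s i : last_visit t (Zs t) = Some s -> 0 <= eta -> eta * 3 <= 1/4 ->
  \sum_k `|W t i k - W s i k| <= 2 * miss i t + 12 * eta + 2 * miss i s.
Proof.
move=> e eta_ge0 eta3.
have dt := profile_informed_dist t i; have ds := profile_informed_dist s i.
have dts := informed_play_drift _ _ i e eta_ge0 eta3.
apply: le_trans (_ : _ <= \sum_k (`|W t i k - informed_play t i k|
    + `|informed_play t i k - informed_play s i k| + `|W s i k - informed_play s i k|)) _.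
  apply: ler_sum => k _; rewrite [X in _ <= _ + X]distrC.
  have -> : W t i k - W s i k = (W t i k - informed_play t i k)
      + (informed_play t i k - informed_play s i k) + (informed_play s i k - W s i k).
    by ring.
  by apply: le_trans (ler_normD _ _) _; rewrite lerD2r ler_normD.
by rewrite !big_split /=; lra.
Qed.

Lemma cost_hint_dist t s j k : last_visit t (Zs t) = Some s ->
  0 <= eta -> eta * 3 <= 1/4 ->
  `|round_cost t j k - round_hint t j k| <= 12 * eta * J%:R + 2 * misses t + 2 * misses s.
Proof.
move=> e eta_ge0 eta3; have [Zs_s ->] := round_hint_last_visit _ j _ e.
rewrite /round_cost Zs_s.
apply: le_trans (action_cost_lipschitz _ _ (fun i a => cost_bounded i a (Zs t)) _ _ _ _
  (profile_simplex t) (profile_simplex s)) _.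
apply: le_trans (ler_sum _ (fun i _ => profile_drift _ _ i e eta_ge0 eta3)) _.
rewrite !big_split /= -!mulr_sumr sumr_const card_ord -/(misses t) -/(misses s).
rewrite -[_ *+ J]mulr_natr; lra.
Qed.

Section Regret.
Variables (j : 'I_J) (pi : 'I_m -> 'I_K -> R).
Hypothesis pi_simplex : forall zz, in_simplex (pi zz).

Definition regret t := \sum_k (W t j k - pi (Zs t) k) * round_cost t j k.

Definition ctx_potential t :=
  \sum_zz log_potential eta (st_rho (st t) j zz) (pi zz).

(* A context never visited before round [t] carries slack [1]; one last visited
   at round [s] carries [12 J misses(s)], which pays for the hint error at its
   next visit (see [sqr_cost_hint_le]).  Every round is the last visit of at most
   one context, so the slack spent over the whole game is at most
   [m + 12 J \sum_t misses t] (see [total_slack_step]). *)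
Definition visit_slack t zz : R :=
  if last_visit t zz is Some s then 12 * J%:R * misses s else 1.

Definition total_slack t := \sum_zz visit_slack t zz.

Lemma ctx_potential_step t : ctx_potential t.+1 - ctx_potential t =
  log_potential eta (fun k => st_rho (st t) j (Zs t) k * expR (- eta * round_cost t j k))
    (pi (Zs t))
  - log_potential eta (st_rho (st t) j (Zs t)) (pi (Zs t)).
Proof.
rewrite /ctx_potential (bigD1 (Zs t)) // [X in _ - X](bigD1 (Zs t)) //.
rewrite (eq_bigr (fun zz => log_potential eta (st_rho (st t) j zz) (pi zz))); last first.
  by move=> zz ne; congr log_potential; apply/funext => k; rewrite st_rho_other.
have -> : st_rho (st t.+1) j (Zs t) =
    (fun k => st_rho (st t) j (Zs t) k * expR (- eta * round_cost t j k)).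
  by apply/funext => k; rewrite st_rho_cur.
by rewrite opprD addrACA subrr addr0.
Qed.

Lemma visit_slack_ge0 t zz : 0 <= visit_slack t zz.
Proof.
rewrite /visit_slack; case: (last_visit t zz) => // s.
by rewrite !mulr_ge0 ?ler0n ?misses_ge0.
Qed.

Lemma total_slack_step t :
  total_slack t.+1 = total_slack t - visit_slack t (Zs t) + 12 * J%:R * misses t.
Proof.
rewrite /total_slack (bigD1 (Zs t)) //= [in RHS](bigD1 (Zs t)) //=.
rewrite [in X in _ + X](eq_bigr (fun zz => visit_slack t zz)) => [|zz ne].
  by rewrite [in LHS]/visit_slack /= eqxx; lra.
by rewrite /visit_slack /= eq_sym (negbTE ne).
Qed.

Lemma total_slack0 : total_slack 0 = m%:R.
Proof. by rewrite /total_slack sumr_const card_ord. Qed.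

Lemma ctx_potential0 : ctx_potential 0 = m%:R * (- ln K%:R / eta).
Proof.
rewrite /ctx_potential (eq_bigr (fun _ => - ln K%:R / eta)) => [|zz _].
  by rewrite sumr_const card_ord mulr_natl.
exact: log_potential_uniform.
Qed.

Lemma sqr_cost_hint_le t k : 0 <= eta -> eta * 3 <= 1/4 ->
  (round_cost t j k - round_hint t j k) ^+ 2 <=
  432 * eta ^+ 2 * J%:R ^+ 2 + 12 * J%:R * misses t + visit_slack t (Zs t).
Proof.
move=> eta_ge0 eta3; have Et0 := misses_ge0 t; have EtJ := misses_leJ t.
have J0 : 0 <= J%:R :> R by exact: ler0n.
rewrite /visit_slack; case e : (last_visit t (Zs t)) => [s|].
  have Es0 := misses_ge0 s; have EsJ := misses_leJ s.
  have := cost_hint_dist _ _ j k e eta_ge0 eta3; set x := _ - _; set D := _ + _ + _ => xD.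
  have D0 : 0 <= D by rewrite /D; nra.
  apply: le_trans (_ : x ^+ 2 <= D ^+ 2) _.
    by rewrite -real_normK ?num_real // ler_pXn2r ?nnegrE.
  have : misses t * misses t <= J%:R * misses t by nra.
  have : misses s * misses s <= J%:R * misses s by nra.
  by rewrite /D !expr2; nra.
rewrite (round_hint_unvisited t j e) subr0.
have := round_cost_bound t j k; rewrite ler_norml => /andP[? ?].
have : 0 <= 432 * eta ^+ 2 * J%:R ^+ 2 by rewrite !expr2; nra.
by rewrite expr2; nra.
Qed.

Lemma regret_step t : 0 < eta -> eta * 3 <= 1/4 ->
  regret t <= ctx_potential t.+1 - ctx_potential t
    + 2 * eta * (432 * eta ^+ 2 * J%:R ^+ 2 + 12 * J%:R * misses t + visit_slack t (Zs t))
    + 2 * miss j t.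
Proof.
move=> eta_gt0 eta3.
have -> : regret t = \sum_k (informed_play t j k - pi (Zs t) k) * round_cost t j k
    + \sum_k (W t j k - informed_play t j k) * round_cost t j k.
  by rewrite -big_split /=; apply: eq_bigr => k _; ring.
have mispredict : \sum_k (W t j k - informed_play t j k) * round_cost t j k <= 2 * miss j t.
  apply: le_trans (profile_informed_dist t j); apply: ler_sum => k _.
  apply: le_trans (ler_norm _) _; rewrite normrM ler_piMr //; exact: round_cost_bound.
have informed := log_potential_step _ K_gt0 _ _ _ _ _ (st_rho_gt0 t j (Zs t)) eta_gt0 _
  (pi_simplex (Zs t)) _ (fun k => sqr_cost_hint_le t k (ltW eta_gt0) eta3).
rewrite ctx_potential_step; apply: lerD => //; apply: informed; first lra.
move=> k; have := round_hint_bound t j k; have := round_cost_bound t j k.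
by rewrite !ler_norml => /andP[? ?] /andP[? ?]; apply/andP; split; lra.
Qed.

Lemma regret_sum_le T : 0 < eta -> eta * 3 <= 1/4 ->
  \sum_(t < T) regret t <= m%:R * ln K%:R / eta + 2 * eta * m%:R
    + 864 * eta ^+ 3 * J%:R ^+ 2 * T%:R + 48 * eta * J%:R * \sum_(t < T) misses t
    + 2 * \sum_(t < T) miss j t.
Proof.
move=> eta_gt0 eta3; pose a t := ctx_potential t - 2 * eta * total_slack t.
have step t : regret t <= a t.+1 - a t
    + (864 * eta ^+ 3 * J%:R ^+ 2 + 48 * eta * J%:R * misses t + 2 * miss j t).
  by apply: le_trans (regret_step t eta_gt0 eta3) _; rewrite /a total_slack_step; lra.
have aT : a T <= 0.
  have pot_le0 : ctx_potential T <= 0.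
    apply: sumr_le0 => zz _; apply: (log_potential_le0 _ K_gt0) => //.
    exact: st_rho_gt0.
  have slack_ge0 : 0 <= total_slack T by apply: sumr_ge0 => zz _; exact: visit_slack_ge0.
  by rewrite /a; nra.
have a0 : a 0%N = - (m%:R * ln K%:R / eta) - 2 * eta * m%:R.
  by rewrite /a ctx_potential0 total_slack0 mulrA mulrN mulNr.
apply: le_trans (ler_sum _ (fun (t : 'I_T) _ => step t)) _.
rewrite big_split /= -(big_mkord xpredT (fun t => a t.+1 - a t)) telescope_sumr //.
rewrite !big_split /= sumr_const card_ord -!mulr_sumr -[_ *+ T]mulr_natr; lra.
Qed.

Lemma regret_le2 t : regret t <= 2.
Proof.
have hW := profile_simplex t j; have hp := pi_simplex (Zs t).
apply: (@le_trans _ _ (\sum_k (W t j k + pi (Zs t) k))).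
  apply: ler_sum => k _; have := round_cost_bound t j k.
  rewrite ler_norml => /andP[? ?].
  by have := simplex_ge0 k hW; have := simplex_ge0 k hp; nra.
by rewrite big_split /= (simplex_sum1 hW) (simplex_sum1 hp).
Qed.

Lemma regret_K1 t : K = 1%N -> regret t = 0.
Proof.
move=> K1; rewrite /regret big1 // => k _.
rewrite (simplex_single k K1 (profile_simplex t j)).
by rewrite (simplex_single k K1 (pi_simplex _)) subrr mul0r.
Qed.
End Regret.

Lemma sum_miss T j : \sum_(t < T) miss j t = (mistakes T Zs Zhat j)%:R.
Proof. by rewrite /mistakes natr_sum. Qed.

Lemma sum_misses_le T : \sum_(t < T) misses t <= J%:R * (max_mistakes T Zs Zhat)%:R.
Proof.
rewrite /misses exchange_big /= (eq_bigr (fun i => (mistakes T Zs Zhat i)%:R)) => [|i _].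
  apply: (@le_trans _ _ (\sum_(i < J) (max_mistakes T Zs Zhat)%:R)).
    by apply: ler_sum => i _; rewrite ler_nat (leq_bigmax i).
  by rewrite sumr_const card_ord mulr_natl.
exact: sum_miss.
Qed.

Lemma regret_sum_le_mistakes T j pi : (forall zz, in_simplex (pi zz)) ->
  0 < eta -> eta * 3 <= 1/4 ->
  \sum_(t < T) regret j pi t <= m%:R * ln K%:R / eta + 2 * eta * m%:R
    + 864 * eta ^+ 3 * J%:R ^+ 2 * T%:R
    + 48 * eta * J%:R ^+ 2 * (max_mistakes T Zs Zhat)%:R
    + 2 * (max_mistakes T Zs Zhat)%:R.
Proof.
move=> pi_simplex eta_gt0 eta3.
apply: le_trans (regret_sum_le j pi pi_simplex T eta_gt0 eta3) _.
have own : \sum_(t < T) miss j t <= (max_mistakes T Zs Zhat)%:R.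
  by rewrite sum_miss ler_nat /max_mistakes (leq_bigmax j).
have others : 48 * eta * J%:R * \sum_(t < T) misses t <=
    48 * eta * J%:R * (J%:R * (max_mistakes T Zs Zhat)%:R).
  by rewrite ler_wpM2l ?sum_misses_le // !mulr_ge0 ?ler0n // ltW.
by rewrite expr2 -mulrA; lra.
Qed.

Section Equilibrium.
Variable T : nat.
Local Notation n zz := (n_ctx T Zs zz).
Local Notation nu := (nu_hat T (fun t => W t) Zs).

Lemma sum_ctx_average (g : nat -> R) (F : 'I_m -> R) :
  (forall zz, (0 < n zz)%N -> F zz = (n zz)%:R^-1 * \sum_(t < T | Zs t == zz) g t) ->
  \sum_(t < T) F (Zs t) = \sum_(t < T) g t.
Proof.
move=> F_avg; rewrite (partition_big (fun t : 'I_T => Zs t) xpredT) //=.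
rewrite [RHS](partition_big (fun t : 'I_T => Zs t) xpredT) //=.
apply: eq_bigr => zz _.
have -> : \sum_(t < T | Zs t == zz) F (Zs t) = (n zz)%:R * F zz.
  rewrite (eq_bigr (fun _ => F zz)) => [|t /eqP -> //].
  rewrite big_mkcond /= /n_ctx natr_sum mulr_suml; apply: eq_bigr => t _.
  by case: (Zs t == zz); rewrite ?mul1r ?mul0r.
have [n0|n_gt0] := posnP (n zz).
  rewrite n0 mul0r big1 // => t hs.
  by move: n0; rewrite /n_ctx (bigD1 t) //= hs.
by rewrite F_avg // mulrA mulfV ?mul1r ?pnatr_eq0 -?lt0n.
Qed.

Variables (j : 'I_J) (pi : 'I_m -> 'I_K -> R).

Lemma exp_cost_nu_hat zz : (0 < n zz)%N ->
  exp_cost (phi j) (nu zz) (z zz) =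
  (n zz)%:R^-1 * \sum_(s < T | Zs s == zz) \sum_k W s j k * round_cost s j k.
Proof.
move=> n_gt0; rewrite /exp_cost /nu_hat n_gt0.
under eq_bigr do rewrite -mulrA mulr_suml.
rewrite -mulr_sumr exchange_big /=; congr (_ * _).
by apply: eq_bigr => s /eqP Zs_s; rewrite -exp_cost_prod_dist /round_cost Zs_s.
Qed.

Lemma exp_cost_dev_nu_hat zz : (0 < n zz)%N ->
  exp_cost (phi j) (dev_dist j (pi zz) (nu zz)) (z zz) =
  (n zz)%:R^-1 * \sum_(s < T | Zs s == zz) \sum_k pi zz k * round_cost s j k.
Proof.
move=> n_gt0.
have marg a : marginal_minus j (nu zz) a =
    (n zz)%:R^-1 * \sum_(s < T | Zs s == zz) \prod_(i | i != j) W s i (a i).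
  rewrite /marginal_minus /nu_hat n_gt0 -mulr_sumr exchange_big /=; congr (_ * _).
  apply: eq_bigr => s _.
  by rewrite -(marginal_minus_prod_dist j (W s) a (profile_simplex s j)).
rewrite /exp_cost /dev_dist; under eq_bigr do rewrite marg.
have -> : \sum_(a : {ffun 'I_J -> 'I_K}) pi zz (a j) * ((n zz)%:R^-1 *
      \sum_(s < T | Zs s == zz) \prod_(i | i != j) W s i (a i)) * ip (phi j a) (z zz) =
    (n zz)%:R^-1 * \sum_(s < T | Zs s == zz) \sum_(a : {ffun 'I_J -> 'I_K})
      pi zz (a j) * \prod_(i | i != j) W s i (a i) * ip (phi j a) (z zz).
  rewrite exchange_big /= mulr_sumr; apply: eq_bigr => a _.
  set I := ip _ _; clearbody I.
  by rewrite !mulr_sumr mulr_suml; apply: eq_bigr => s _; ring.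
congr (_ * _); apply: eq_bigr => s /eqP Zs_s.
by rewrite sum_action_cost /round_cost Zs_s.
Qed.

Lemma cce_gap_regret :
  \sum_(t < T) exp_cost (phi j) (nu (Zs t)) (z (Zs t))
  - \sum_(t < T) exp_cost (phi j) (dev_dist j (pi (Zs t)) (nu (Zs t))) (z (Zs t))
  = \sum_(t < T) regret j pi t.
Proof.
rewrite -sumrB; apply: (sum_ctx_average (regret j pi) (fun zz =>
  exp_cost (phi j) (nu zz) (z zz) - exp_cost (phi j) (dev_dist j (pi zz) (nu zz)) (z zz))).
move=> zz n_gt0.
rewrite exp_cost_nu_hat // exp_cost_dev_nu_hat // -mulrBr -sumrB; congr (_ * _).
apply: eq_bigr => s /eqP Zs_s; rewrite /regret -sumrB Zs_s.
by apply: eq_bigr => k _; rewrite mulrBl.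
Qed.
End Equilibrium.

Lemma cce_of_regret_le T eps : (0 < T)%N ->
  (forall j pi, (forall zz, in_simplex (pi zz)) -> \sum_(t < T) regret j pi t <= T%:R * eps) ->
  is_contextual_CCE T z phi Zs (nu_hat T (fun t => W t) Zs) eps.
Proof.
move=> T_gt0 regret_le j pi pi_simplex.
have : T%:R^-1 * \sum_(t < T) exp_cost (phi j) (nu_hat T (fun t => W t) Zs (Zs t)) (z (Zs t))
    - T%:R^-1 * \sum_(t < T) exp_cost (phi j)
        (dev_dist j (pi (Zs t)) (nu_hat T (fun t => W t) Zs (Zs t))) (z (Zs t)) <= eps.
  by rewrite -mulrBr cce_gap_regret ler_pdivrMl ?ltr0n ?regret_le.
lra.
Qed.

End Dynamics.

(* [x], [y] and [s] stand for [(ln K (Lbar + m))^(1/4)], [T^(1/4)] and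
   [J^(1/2)], so that [eta = x / (s y)] and [T eps = 3456 x^3 s y]. *)
Section RegretRate.
Context {R : realType}.
Variables (x y s eta lK L m : R).
Hypotheses (x_gt0 : 0 < x) (y_gt0 : 0 < y) (s_ge1 : 1 <= s).
Hypotheses (lK_ge : 1/2 <= lK) (L_ge0 : 0 <= L) (m_ge0 : 0 <= m).
Hypothesis budget : lK * (L + m) = x ^+ 4.
Hypothesis horizon : s ^+ 4 * L <= y ^+ 4.
Hypothesis eta_def : eta * (s * y) = x.

Let le_budget (a b : R) : 0 <= a -> 0 <= b -> lK * (a + b) = x ^+ 4 -> a <= 2 * x ^+ 4.
Proof.
move=> a0 b0 <-; have h1 : 0 <= (lK - 1/2) * a by rewrite mulr_ge0 // subr_ge0.
have h2 : 0 <= lK * b by rewrite mulr_ge0 //; move: lK_ge; lra.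
nra.
Qed.

Let mistakes_le_budget : L <= 2 * x ^+ 4.
Proof. exact: le_budget _ _ L_ge0 m_ge0 budget. Qed.

Let ctx_le_budget : m <= 2 * x ^+ 4.
Proof. by apply: le_budget _ _ m_ge0 L_ge0 _; rewrite addrC. Qed.

Let sqr_mistakes_le : s ^+ 2 * L <= 2 * x ^+ 2 * y ^+ 2.
Proof.
have x0 := ltW x_gt0; have y0 := ltW y_gt0.
have s0 : 0 <= s by move: s_ge1; lra.
rewrite -(@ler_pXn2r _ 2) ?nnegrE ?mulr_ge0 ?exprn_ge0 //.
apply: le_trans (_ : _ <= y ^+ 4 * (2 * x ^+ 4)) _.
  have -> : (s ^+ 2 * L) ^+ 2 = (s ^+ 4 * L) * L by ring.
  by rewrite ler_pM ?mulr_ge0 ?exprn_ge0.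
have xy : 0 <= x ^+ 4 * y ^+ 4 by rewrite mulr_ge0 ?exprn_ge0.
have -> : (2 * x ^+ 2 * y ^+ 2) ^+ 2 = 4 * (x ^+ 4 * y ^+ 4) by ring.
have -> : y ^+ 4 * (2 * x ^+ 4) = 2 * (x ^+ 4 * y ^+ 4) by ring.
lra.
Qed.

Let mistakes_le_rate : L <= 2 * (x ^+ 3 * s * y).
Proof.
have x0 := ltW x_gt0; have y0 := ltW y_gt0.
have s2 : 1 <= s ^+ 2 by rewrite expr_ge1 // (le_trans ler01).
have L_le : L <= 2 * x ^+ 2 * y ^+ 2.
  by apply: le_trans sqr_mistakes_le; rewrite ler_peMl.
have : L <= 2 * x ^+ 3 * y.
  rewrite -(@ler_pXn2r _ 2) ?nnegrE ?mulr_ge0 ?exprn_ge0 //.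
  apply: le_trans (_ : _ <= (2 * x ^+ 4) * (2 * x ^+ 2 * y ^+ 2)) _.
    by rewrite expr2 ler_pM.
  by rewrite le_eqVlt; apply/orP; left; apply/eqP; ring.
have : 0 <= (s - 1) * (x ^+ 3 * y) by rewrite mulr_ge0 ?subr_ge0 ?mulr_ge0 ?exprn_ge0.
nra.
Qed.

Lemma regret_rate_small : eta * 12 <= 1 ->
  m * lK / eta + 2 * eta * m + 864 * eta ^+ 3 * (s ^+ 2) ^+ 2 * y ^+ 4
  + 48 * eta * (s ^+ 2) ^+ 2 * L + 2 * L <= 3456 * (x ^+ 3 * s * y).
Proof.
move=> eta12; set u := x ^+ 3 * s * y.
have u0 : 0 <= u by rewrite !mulr_ge0 ?exprn_ge0 ?ltW //; move: s_ge1; lra.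
have sy_gt0 : 0 < s * y by rewrite mulr_gt0 //; move: s_ge1; lra.
have eta_gt0 : 0 < eta by rewrite -(pmulr_lgt0 _ sy_gt0) eta_def.
have u_eta : u * eta = x ^+ 4 by rewrite /u -eta_def; ring.
have ctx_term : m * lK / eta <= u.
  rewrite ler_pdivrMr //; apply: le_trans (_ : _ <= x ^+ 4) _; last by rewrite -u_eta.
  rewrite -budget mulrC ler_wpM2l ?lerDr //; move: lK_ge; lra.
have ctx_term' : 2 * eta * m <= u.
  have h : 2 * eta * m <= 4 * eta * x ^+ 4 by move: ctx_le_budget (ltW eta_gt0); nra.
  rewrite -u_eta in h; have e2 : eta * eta <= 1/144 by nra.
  nra.
have horizon_term : 864 * eta ^+ 3 * (s ^+ 2) ^+ 2 * y ^+ 4 = 864 * u.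
  by rewrite /u -eta_def; ring.
have mistakes_term : 48 * eta * (s ^+ 2) ^+ 2 * L <= 96 * u.
  rewrite -(ler_pM2r y_gt0).
  have -> : 48 * eta * (s ^+ 2) ^+ 2 * L * y = 48 * (x * s) * (s ^+ 2 * L).
    by rewrite -eta_def; ring.
  apply: le_trans (_ : _ <= 48 * (x * s) * (2 * x ^+ 2 * y ^+ 2)) _.
    by rewrite ler_wpM2l ?sqr_mistakes_le // !mulr_ge0 ?ltW //; move: s_ge1; lra.
  by rewrite le_eqVlt; apply/orP; left; apply/eqP; rewrite /u; ring.
move: mistakes_le_rate; rewrite -/u horizon_term; lra.
Qed.

Lemma regret_rate_large : 1 < eta * 12 -> 2 * y ^+ 4 <= 3456 * (x ^+ 3 * s * y).
Proof.
move=> eta12; have x0 := ltW x_gt0; have y0 := ltW y_gt0.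
have sy_gt0 : 0 < s * y by rewrite mulr_gt0 //; move: s_ge1; lra.
have sy_le : s * y <= 12 * x.
  have : 0 < (eta * 12 - 1) * (s * y) by rewrite mulr_gt0 // subr_gt0.
  by rewrite -eta_def; nra.
have y_le : y <= 12 * x by apply: le_trans sy_le; rewrite ler_peMl.
have : y ^+ 3 <= (12 * x) ^+ 3 by rewrite ler_pXn2r ?nnegrE // mulr_ge0.
have : 0 <= (s - 1) * (x ^+ 3 * y) by rewrite mulr_ge0 ?subr_ge0 ?mulr_ge0 ?exprn_ge0.
rewrite exprMn !exprS !expr0 => h1 h2; move: y0; nra.
Qed.

End RegretRate.

Section PowR.
Context {R : realType}.

Lemma powR_ratio (a : R) k n : 0 <= a -> a `^ (k%:R / n%:R) = (a `^ (1 / n%:R)) ^+ k.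
Proof. by move=> a0; rewrite -powR_mulrn ?powR_ge0 // -powRrM mul1r mulrC. Qed.

Lemma powR_rootK (a : R) n : 0 <= a -> (0 < n)%N -> (a `^ (1 / n%:R)) ^+ n = a.
Proof.
by move=> a0 n_gt0; rewrite -powR_ratio // divff ?powRr1 // pnatr_eq0 -lt0n.
Qed.

End PowR.

Lemma pomwu_regret_rate {R : realType} (J K d m T : nat) (eta : R)
    (z : 'I_m -> 'rV[R]_d) (phi : 'I_J -> {ffun 'I_J -> 'I_K} -> 'rV[R]_d)
    (Zs : nat -> 'I_m) (Zhat : 'I_J -> nat -> 'I_m) j pi :
  let Lbar := (max_mistakes T Zs Zhat)%:R : R in
  let A := ln K%:R * (Lbar + m%:R) in
  (1 < K)%N -> (0 < J)%N -> (0 < T)%N ->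
  (forall j a zz, `|ip (phi j a) (z zz)| <= 1) -> (forall zz, in_simplex (pi zz)) ->
  J%:R ^+ 2 * Lbar <= T%:R ->
  eta = J%:R `^ (- (1 / 2)) * T%:R `^ (- (1 / 4)) * A `^ (1 / 4) ->
  \sum_(t < T) regret eta z phi Zs Zhat j pi t <=
  T%:R * (3456 * A `^ (3 / 4) * T%:R `^ (- (3 / 4)) * J%:R `^ (1 / 2)).
Proof.
move=> Lbar A K_gt1 J_gt0 T_gt0 bounded pi_simplex horizon eta_def.
have K_gt0 : (0 < K)%N by apply: ltn_trans K_gt1.
have lK_ge : 1/2 <= ln (K%:R : R).
  by apply: le_trans ln2_ge_half _; rewrite ler_ln ?posrE ?ltr0n // ler_nat.
have Lbar_ge0 : 0 <= Lbar by exact: ler0n.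
have m_ge1 : 1 <= m%:R :> R by rewrite ler1n (leq_ltn_trans (leq0n _) (ltn_ord (Zs 0%N))).
have A_gt0 : 0 < A by rewrite /A mulr_gt0 //; lra.
set x := A `^ (1 / 4); set y := (T%:R : R) `^ (1 / 4); set s := (J%:R : R) `^ (1 / 2).
have x_gt0 : 0 < x by rewrite powR_gt0.
have y_gt0 : 0 < y by rewrite powR_gt0 ?ltr0n.
have s_ge1 : 1 <= s.
  by rewrite /s -[X in X <= _](powRr0 (J%:R : R)); apply: ler_powR; rewrite ?ler1n //; lra.
have x4 : A = x ^+ 4 by rewrite powR_rootK // ltW.
have y4 : T%:R = y ^+ 4 by rewrite powR_rootK ?ler0n.
have s2 : J%:R = s ^+ 2 by rewrite powR_rootK ?ler0n.
have eta_sy : eta * (s * y) = x.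
  by rewrite eta_def !powRN -/x -/y -/s; field; rewrite !gt_eqF // (lt_le_trans ltr01).
rewrite (powR_ratio _ 3 4 (ltW A_gt0)) -/x powRN (powR_ratio _ 3 4 (ler0n _ T)) -/y -/s y4.
rewrite [X in _ <= X](_ : _ = 3456 * (x ^+ 3 * s * y)); last by field; rewrite gt_eqF.
have [eta_small|eta_large] := lerP (eta * 12) 1.
  have sy_gt0 : 0 < s * y by rewrite mulr_gt0 // (lt_le_trans ltr01 s_ge1).
  have eta_gt0 : 0 < eta by rewrite -(pmulr_lgt0 _ sy_gt0) eta_sy.
  apply: le_trans (regret_sum_le_mistakes _ _ _ _ _ K_gt0 bounded _ _ _ pi_simplex eta_gt0 _) _.
    lra.
  rewrite s2 y4; apply: regret_rate_small => //.
  by rewrite -y4 (_ : s ^+ 4 = J%:R ^+ 2) // s2 -exprM.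
apply: le_trans (_ : _ <= \sum_(t < T) 2) _.
  by apply: ler_sum => t _; exact: regret_le2.
rewrite sumr_const card_ord -[_ *+ T]mulr_natr y4.
exact: regret_rate_large x_gt0 y_gt0 s_ge1 eta_sy eta_large.
Qed.

Theorem corollary1 (R : realType) :
  exists cT c_eta C : R, 0 < cT /\ 0 < c_eta /\ 0 < C /\
  forall (J K d m T : nat) (z : 'I_m -> 'rV[R]_d)
         (phi : 'I_J -> {ffun 'I_J -> 'I_K} -> 'rV[R]_d)
         (Zs : nat -> 'I_m) (Zhat : 'I_J -> nat -> 'I_m),
    (2 <= J)%N -> (0 < T)%N ->
    injective z ->
    (forall j a zz, `|ip (phi j a) (z zz)| <= 1) ->
    let Lbar := (max_mistakes T Zs Zhat)%:R : R in
    cT * (J%:R) ^+ 2 * Lbar <= T%:R ->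
    let eta := c_eta * (J%:R) `^ (- (1 / 2)) * (T%:R) `^ (- (1 / 4))
               * (ln (K%:R) * (Lbar + m%:R)) `^ (1 / 4) in
    is_contextual_CCE T z phi Zs
      (nu_hat T (pomwu_profile eta z phi Zs Zhat) Zs)
      (C * (ln (K%:R) * (Lbar + m%:R)) `^ (3 / 4) * (T%:R) `^ (- (3 / 4))
         * (J%:R) `^ (1 / 2)).
Proof.
exists 1, 1, 3456; split; [lra | split; [lra | split; [lra | ]]].
move=> J K d m T z phi Zs Zhat J_ge2 T_gt0 _ bounded Lbar horizon eta.
have [K0|K_gt0] := posnP K.
  by move=> j pi /(_ (Zs 0%N)) /simplex_nonempty K_pos; exfalso; rewrite K0 in K_pos.
apply: (cce_of_regret_le _ _ _ _ _ K_gt0 _ _ T_gt0) => j pi pi_simplex.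
have [K1|K_neq1] := eqVneq K 1%N.
  rewrite big1 => [|t _]; last exact: (regret_K1 _ _ _ _ _ K_gt0 _ _ pi_simplex _ K1).
  apply: mulr_ge0; first exact: ler0n.
  by do 3![apply: mulr_ge0; last exact: powR_ge0]; exact: ler0n.
apply: pomwu_regret_rate.
- by rewrite ltn_neqAle eq_sym K_neq1.
- exact: leq_trans J_ge2.
- exact: T_gt0.
- exact: bounded.
- exact: pi_simplex.
- by move: horizon; rewrite mul1r.
- by rewrite /eta mul1r.
Qed.
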